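(* Let $S$ be a finite training set of examples $(\mathbf{x},y)$ with $\mathbf{x}\in[-1,1]^d$, $y\in\{1,\dots,k\}$. Let $F,\bar F\subseteq\{1,\dots,d\}$ with $\bar F\setminus F\neq\emptyset$, and let $$W\in\arg\min_{V:\,\mathrm{supp}(V)\subseteq F}L(V),\qquad W^\star\in\arg\min_{V:\,\mathrm{supp}(V)\subseteq\bar F}L(V)$$ (both minimizers assumed to exist). Let $j\in\arg\max_{i\in\{1,\dots,d\}}\|\nabla_iL(W)\|_1$. If $L(W)>L(W^\star)$, then $$L(W)-\inf_{\mathbf{u}\in\mathbb{R}^k}L(W+\mathbf{u}\,\mathbf{e}_j^\top)\;\ge\;\frac{\big(L(W)-L(W^\star)\big)^2}{4\Big(\sum_{i\in\bar F\setminus F}\|W^\star_{\cdot,i}\|_\infty\Big)^2}.$$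
   Context: For $V\in\mathbb{R}^{k\times d}$, $V_{\cdot,i}$ is its $i$-th column and $\mathrm{supp}(V)=\{i: V_{\cdot,i}\neq0\}$. The loss of $W$ on $(\mathbf{x},y)$ is $\ell(W,(\mathbf{x},y))=\ln\sum_{y'\in\{1,\dots,k\}}\exp\big(\mathbf{1}[y'\neq y]-(W\mathbf{x})_y+(W\mathbf{x})_{y'}\big)$, and $L(W)=\frac1{|S|}\sum_{(\mathbf{x},y)\in S}\ell(W,(\mathbf{x},y))$. $\nabla_iL(W)\in\mathbb{R}^k$ denotes the $i$-th column of the gradient matrix $\nabla L(W)$, and $\mathbf{e}_j\in\mathbb{R}^d$ is the $j$-th standard basis vector. *)

From Stdlib Require Export Reals Lra Lia Arith List.
Open Scope R_scope.

Fixpoint rsum (n : nat) (f : nat -> R) : R :=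
  match n with O => 0 | S m => rsum m f + f m end.

Fixpoint rmax_abs (n : nat) (f : nat -> R) : R :=
  match n with O => 0 | S m => Rmax (rmax_abs m f) (Rabs (f m)) end.

(* Matrices in R^{k x d}: functions r i, r < k (rows), i < d (columns).
   Examples: (x, y) with x : R^d (nat -> R) and label y in {0,...,k-1}. *)
Definition example := ((nat -> R) * nat)%type.

Definition mxv (d : nat) (W : nat -> nat -> R) (x : nat -> R) (r : nat) : R :=
  rsum d (fun i => W r i * x i).

Definition loss (k d : nat) (W : nat -> nat -> R) (e : example) : R :=
  let (x, y) := e in
  ln (rsum k (fun y' => exp ((if Nat.eqb y' y then 0 else 1)
                              - mxv d W x y + mxv d W x y'))).

Definition Lrisk (k d : nat) (S : list example) (W : nat -> nat -> R) : R :=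
  / INR (length S) * fold_right Rplus 0 (map (loss k d W) S).

Definition supp_sub (k d : nat) (V : nat -> nat -> R) (F : nat -> bool) : Prop :=
  forall i, (i < d)%nat -> (exists r, (r < k)%nat /\ V r i <> 0) -> F i = true.

Definition is_argmin_supp (k d : nat) (S : list example) (F : nat -> bool)
  (W : nat -> nat -> R) : Prop :=
  supp_sub k d W F /\
  forall V, supp_sub k d V F -> Lrisk k d S W <= Lrisk k d S V.

Definition bump (W : nat -> nat -> R) (r i : nat) (t : R) : nat -> nat -> R :=
  fun r' i' => W r' i' + (if andb (Nat.eqb r' r) (Nat.eqb i' i) then t else 0).

Definition is_gradient (k d : nat) (S : list example) (W G : nat -> nat -> R) : Prop :=
  forall r i, (r < k)%nat -> (i < d)%nat ->
    derivable_pt_lim (fun t => Lrisk k d S (bump W r i t)) 0 (G r i).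

Definition add_col (W : nat -> nat -> R) (u : nat -> R) (j : nat) : nat -> nat -> R :=
  fun r i => W r i + (if Nat.eqb i j then u r else 0).

Definition is_glb (E : R -> Prop) (m : R) : Prop :=
  (forall x, E x -> m <= x) /\ (forall b, (forall x, E x -> b <= x) -> b <= m).

From Stdlib Require Import Reals Lra Lia FunctionalExtensionality.
From Coquelicot Require Import Coquelicot.
Open Scope R_scope.

(* The loss of an example is log-sum-exp of "logits" that are
   affine in W; hence the empirical risk L is convex, its gradient is an
   average of softmax-weighted logit derivatives, and along one column j with
   features in [-1, 1] it is smooth in the sup-norm: a column step u with
   |u_a| <= t <= 1 costs at most t^2 beyond first order.  The argument:
   - convexity and first-order optimality of W on F (the gradient vanishes on
     columns of F) give eps := L(W) - L(Wstar) <= |G_{., j}|_1 * B, where B is the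
     sum over the new columns Fbar \ F of |Wstar_{., i}|_oo (Hölder per column);
   - the columns of G have l1-norm at most 2, so the signed step
     u = -(|G_{., j}|_1 / 2) sign(G_{., j}) decreases L by |G_{., j}|_1^2 / 4;
   - combining, L(W) - inf_u L(W + u e_j^T) >= (eps / B)^2 / 4.
   The file develops finite sums and averages, two exponential inequalities,
   log-sum-exp, the per-example and then the risk-level facts, and finally
   the gap bound and the descent step. *)

Lemma rsum_ext n f g :
  (forall i, (i < n)%nat -> f i = g i) -> rsum n f = rsum n g.
Proof.
  induction n as [|n IH]; intros H; simpl; [reflexivity|].
  rewrite IH by (intros; apply H; lia). rewrite H by lia. reflexivity.
Qed.

Lemma rsum_le n f g :
  (forall i, (i < n)%nat -> f i <= g i) -> rsum n f <= rsum n g.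
Proof.
  induction n as [|n IH]; intros H; simpl; [lra|].
  assert (f n <= g n) by (apply H; lia).
  assert (rsum n f <= rsum n g) by (apply IH; intros; apply H; lia). lra.
Qed.

Lemma rsum_plus n f g : rsum n (fun i => f i + g i) = rsum n f + rsum n g.
Proof. induction n as [|n IH]; simpl; [lra|]. rewrite IH. ring. Qed.

Lemma rsum_scal n c f : rsum n (fun i => c * f i) = c * rsum n f.
Proof. induction n as [|n IH]; simpl; [lra|]. rewrite IH. ring. Qed.

Lemma rsum_opp n f : rsum n (fun i => - f i) = - rsum n f.
Proof. induction n as [|n IH]; simpl; [lra|]. rewrite IH. ring. Qed.

Lemma rsum_zero n : rsum n (fun _ => 0) = 0.
Proof. induction n as [|n IH]; simpl; [lra|]. rewrite IH. ring. Qed.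

Lemma rsum_swap n m f :
  rsum n (fun i => rsum m (fun j => f i j)) = rsum m (fun j => rsum n (fun i => f i j)).
Proof.
  induction n as [|n IH]; simpl; [now rewrite rsum_zero|].
  rewrite IH, <- rsum_plus. reflexivity.
Qed.

Lemma rsum_weighted_swap k n p g :
  rsum k (fun a => p a * rsum n (fun i => g i a)) = rsum n (fun i => rsum k (fun a => p a * g i a)).
Proof.
  rewrite <- rsum_swap. apply rsum_ext. intros a _. now rewrite <- rsum_scal.
Qed.

Lemma rsum_delta n i f :
  (i < n)%nat -> rsum n (fun a => if Nat.eqb a i then f a else 0) = f i.
Proof.
  induction n as [|n IH]; intros Hi; [lia|]. simpl.
  destruct (Nat.eq_dec i n) as [->|Hne].
  - rewrite Nat.eqb_refl, (rsum_ext n _ (fun _ => 0)), rsum_zero; [ring|].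
    intros a Ha. destruct (Nat.eqb_spec a n); [lia|reflexivity].
  - rewrite IH by lia. destruct (Nat.eqb_spec n i); [lia|ring].
Qed.

Lemma rsum_pos n f :
  (0 < n)%nat -> (forall i, (i < n)%nat -> 0 < f i) -> 0 < rsum n f.
Proof.
  induction n as [|n IH]; intros Hn H; [lia|]. simpl.
  assert (0 < f n) by (apply H; lia).
  destruct n as [|n]; [simpl; lra|].
  assert (0 < rsum (S n) f) by (apply IH; [lia|intros; apply H; lia]). lra.
Qed.

Lemma rsum_nonneg n f : (forall i, (i < n)%nat -> 0 <= f i) -> 0 <= rsum n f.
Proof. intros H. rewrite <- (rsum_zero n). now apply rsum_le. Qed.

Lemma rsum_abs n f : Rabs (rsum n f) <= rsum n (fun i => Rabs (f i)).
Proof.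
  induction n as [|n IH]; simpl; [rewrite Rabs_R0; lra|].
  eapply Rle_trans; [apply Rabs_triang|lra].
Qed.

Lemma rmax_abs_ge n f i : (i < n)%nat -> Rabs (f i) <= rmax_abs n f.
Proof.
  induction n as [|n IH]; intros Hi; [lia|]. simpl.
  destruct (Nat.eq_dec i n) as [->|Hne]; [apply Rmax_r|].
  eapply Rle_trans; [apply IH; lia|apply Rmax_l].
Qed.

Lemma rmax_abs_nonneg n f : 0 <= rmax_abs n f.
Proof.
  induction n as [|n IH]; simpl; [lra|].
  eapply Rle_trans; [apply IH|apply Rmax_l].
Qed.

Lemma rsum_holder n a b :
  - (rmax_abs n a * rsum n (fun i => Rabs (b i))) <= rsum n (fun i => a i * b i).
Proof.
  rewrite <- rsum_scal, <- rsum_opp. apply rsum_le. intros i Hi.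
  pose proof (rmax_abs_ge n a i Hi). pose proof (Rabs_pos (b i)).
  pose proof (Rle_abs (- (a i * b i))).
  rewrite Rabs_Ropp, Rabs_mult in *. nra.
Qed.

Definition lsum (S : list example) (f : example -> R) : R :=
  fold_right Rplus 0 (map f S).

Definition avg (S : list example) (f : example -> R) : R :=
  / INR (length S) * lsum S f.

Lemma Lrisk_avg k d S V : Lrisk k d S V = avg S (loss k d V).
Proof. reflexivity. Qed.

Lemma avg_weight_nonneg (S : list example) : 0 <= / INR (length S).
Proof.
  destruct (length S) as [|n]; [simpl INR; rewrite Rinv_0; lra|].
  left. apply Rinv_0_lt_compat, lt_0_INR. lia.
Qed.

Lemma avg_le S f g : (forall e, In e S -> f e <= g e) -> avg S f <= avg S g.
Proof.
  intros H. apply Rmult_le_compat_l; [apply avg_weight_nonneg|].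
  unfold lsum. induction S as [|e S IH]; simpl; [lra|].
  assert (f e <= g e) by (apply H; left; auto).
  assert (fold_right Rplus 0 (map f S) <= fold_right Rplus 0 (map g S))
    by (apply IH; intros; apply H; right; auto). lra.
Qed.

Lemma avg_plus S f g : avg S (fun e => f e + g e) = avg S f + avg S g.
Proof.
  unfold avg, lsum. rewrite <- Rmult_plus_distr_l. f_equal.
  induction S as [|e S IH]; simpl; [lra|]. rewrite IH. ring.
Qed.

Lemma avg_scal S c f : avg S (fun e => c * f e) = c * avg S f.
Proof.
  unfold avg, lsum. replace (c * (/ INR (length S) * fold_right Rplus 0 (map f S)))
    with (/ INR (length S) * (c * fold_right Rplus 0 (map f S))) by ring. f_equal.
  induction S as [|e S IH]; simpl; [lra|]. rewrite IH. ring.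
Qed.

Lemma avg_rsum S n f :
  avg S (fun e => rsum n (fun i => f i e)) = rsum n (fun i => avg S (f i)).
Proof.
  induction n as [|n IH]; simpl.
  - unfold avg, lsum. replace (fold_right Rplus 0 (map (fun _ => 0) S)) with 0; [ring|].
    induction S as [|e S IH]; simpl; [reflexivity|rewrite <- IH; ring].
  - rewrite (avg_plus S (fun e => rsum n (fun i => f i e)) (f n)), IH. reflexivity.
Qed.

Lemma avg_abs S f : Rabs (avg S f) <= avg S (fun e => Rabs (f e)).
Proof.
  unfold avg. rewrite Rabs_mult, (Rabs_pos_eq _ (avg_weight_nonneg S)).
  apply Rmult_le_compat_l; [apply avg_weight_nonneg|].
  unfold lsum. induction S as [|e S IH]; simpl; [rewrite Rabs_R0; lra|].
  eapply Rle_trans; [apply Rabs_triang|lra].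
Qed.

(* The mean of a nonnegative constant is at most that constant (it is 0 when S is empty). *)
Lemma avg_const_le S c : 0 <= c -> avg S (fun _ => c) <= c.
Proof.
  intros Hc. unfold avg, lsum.
  replace (fold_right Rplus 0 (map (fun _ => c) S)) with (INR (length S) * c)
    by (induction S as [|e S IH]; simpl length; [simpl; ring|rewrite S_INR; simpl; rewrite <- IH; ring]).
  destruct (length S) as [|n]; [simpl INR; rewrite Rinv_0; lra|].
  right. field. apply not_0_INR. lia.
Qed.

Lemma avg_deriv S (f : R -> example -> R) f' :
  (forall e, In e S -> derivable_pt_lim (fun t => f t e) 0 (f' e)) ->
  derivable_pt_lim (fun t => avg S (f t)) 0 (avg S f').
Proof.
  intros H. apply (derivable_pt_lim_scal (fun t => lsum S (f t))).
  unfold lsum. induction S as [|e S IH]; simpl.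
  - apply derivable_pt_lim_const.
  - apply (derivable_pt_lim_plus (fun t => f t e) (fun t => fold_right Rplus 0 (map (f t) S))).
    + apply H. left; auto.
    + apply IH. intros; apply H; right; auto.
Qed.

Lemma ln_monotone x y : 0 < x -> x <= y -> ln x <= ln y.
Proof. intros Hx [Hlt|Heq]; [left; now apply ln_increasing|subst; lra]. Qed.

(* Second-order upper bound: exp y <= 1 + y + y^2 for y <= 1.  Equivalently,
   h(y) = (1 + y + y^2) e^{-y} >= 1 = h(0), since h'(c) = c (1 - c) e^{-c} has
   the sign of c on (-oo, 1]. *)
Lemma exp_quadratic_bound y : y <= 1 -> exp y <= 1 + y + y ^ 2.
Proof.
  intros Hy.
  set (h := fun y => (1 + y + y ^ 2) * exp (- y)).
  assert (Hder : forall c, derivable_pt_lim h c (c * (1 - c) * exp (- c))).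
  { intros c. apply is_derive_Reals. unfold h. auto_derive; [exact I|ring]. }
  assert (Hh0 : h 0 = 1) by (unfold h; rewrite Ropp_0, exp_0; ring).
  assert (Hh : 1 <= h y).
  { destruct (Rtotal_order 0 y) as [Hpos|[Hzero|Hneg]]; [| subst; lra |].
    - destruct (MVT_cor2 h _ 0 y Hpos (fun c _ => Hder c)) as [c [Hc [Hc0 Hcy]]].
      pose proof (exp_pos (- c)).
      assert (0 <= c * (1 - c) * exp (- c) * (y - 0)) by
        (apply Rmult_le_pos; [apply Rmult_le_pos; nra|lra]).
      lra.
    - destruct (MVT_cor2 h _ y 0 Hneg (fun c _ => Hder c)) as [c [Hc [Hyc Hc0]]].
      pose proof (exp_pos (- c)).
      assert (c * (1 - c) <= 0) by nra.
      assert (c * (1 - c) * exp (- c) * (0 - y) <= 0) by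
        (apply Rmult_le_0_r; [nra|lra]).
      lra. }
  unfold h in Hh. rewrite exp_Ropp in Hh. pose proof (exp_pos y).
  apply Rmult_le_compat_r with (r := exp y) in Hh; [|lra].
  rewrite Rmult_assoc, Rinv_l, Rmult_1_r, Rmult_1_l in Hh by lra. exact Hh.
Qed.

Lemma exp_jensen k p dl :
  (forall a, (a < k)%nat -> 0 <= p a) -> rsum k p = 1 ->
  exp (rsum k (fun a => p a * dl a)) <= rsum k (fun a => p a * exp (dl a)).
Proof.
  intros Hp Hsum. set (c := rsum k (fun a => p a * dl a)).
  (* tangent line of exp at c *)
  assert (Htan : forall a, (a < k)%nat ->
            p a * (exp c * (1 + (dl a - c))) <= p a * exp (dl a)).
  { intros a Ha. apply Rmult_le_compat_l; [now apply Hp|].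
    replace (exp (dl a)) with (exp c * exp (dl a - c))
      by (rewrite <- exp_plus; f_equal; ring).
    apply Rmult_le_compat_l; [left; apply exp_pos|apply exp_ineq1_le]. }
  eapply Rle_trans; [|apply rsum_le, Htan]. right.
  rewrite (rsum_ext k _ (fun a => exp c * (1 - c) * p a + exp c * (p a * dl a)))
    by (intros; ring).
  rewrite rsum_plus, !rsum_scal, Hsum. fold c. ring.
Qed.

Lemma exp_moment_bound k p dl c0 y t :
  (forall a, (a < k)%nat -> 0 <= p a) -> rsum k p = 1 -> 0 <= t <= 1 ->
  (forall a, (a < k)%nat -> dl a = c0 + y a /\ Rabs (y a) <= t) ->
  rsum k (fun a => p a * exp (dl a)) <= exp (rsum k (fun a => p a * dl a) + t ^ 2).
Proof.
  intros Hp Hsum Ht Hdl. set (my := rsum k (fun a => p a * y a)).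
  assert (Hmean : rsum k (fun a => p a * dl a) = c0 + my).
  { rewrite (rsum_ext k _ (fun a => c0 * p a + p a * y a))
      by (intros a Ha; destruct (Hdl a Ha) as [Hd _]; rewrite Hd; ring).
    rewrite rsum_plus, rsum_scal, Hsum. unfold my. ring. }
  assert (Hterm : forall a, (a < k)%nat ->
            p a * exp (dl a) <= exp c0 * ((1 + t ^ 2) * p a + p a * y a)).
  { intros a Ha. destruct (Hdl a Ha) as [Hd Hya]. rewrite Hd.
    pose proof (Rle_abs (y a)). pose proof (Rle_abs (- y a)).
    rewrite Rabs_Ropp in *. rewrite exp_plus.
    pose proof (exp_quadratic_bound (y a) ltac:(lra)).
    assert (y a ^ 2 <= t ^ 2) by nra.
    pose proof (Hp a Ha). pose proof (exp_pos c0).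
    assert (0 <= exp c0 * p a * (1 + t ^ 2 + y a - exp (y a))) by
      (apply Rmult_le_pos; [apply Rmult_le_pos|]; lra).
    nra. }
  eapply Rle_trans; [apply rsum_le, Hterm|].
  rewrite rsum_scal, rsum_plus, rsum_scal, Hsum, Hmean. fold my.
  rewrite Rplus_assoc, (exp_plus c0). pose proof (exp_pos c0).
  apply Rmult_le_compat_l; [lra|].
  pose proof (exp_ineq1_le (my + t ^ 2)). lra.
Qed.

(** * Log-sum-exp and softmax *)

Definition lse (k : nat) (z : nat -> R) : R := ln (rsum k (fun a => exp (z a))).

Definition softmax (k : nat) (z : nat -> R) (a : nat) : R :=
  exp (z a) / rsum k (fun b => exp (z b)).

Lemma partition_pos k z : (0 < k)%nat -> 0 < rsum k (fun a => exp (z a)).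
Proof. intros Hk. apply rsum_pos; [exact Hk|intros; apply exp_pos]. Qed.

Lemma lse_ext k z z' : (forall a, (a < k)%nat -> z a = z' a) -> lse k z = lse k z'.
Proof. intros H. unfold lse. f_equal. apply rsum_ext. intros a Ha. now rewrite H. Qed.

Lemma softmax_nonneg k z a : (0 < k)%nat -> 0 <= softmax k z a.
Proof.
  intros Hk. unfold softmax. pose proof (partition_pos k z Hk). pose proof (exp_pos (z a)).
  apply Rmult_le_pos; [lra|left; now apply Rinv_0_lt_compat].
Qed.

Lemma softmax_sum k z : (0 < k)%nat -> rsum k (softmax k z) = 1.
Proof.
  intros Hk. pose proof (partition_pos k z Hk). unfold softmax.
  rewrite (rsum_ext k _ (fun a => / rsum k (fun b => exp (z b)) * exp (z a)))
    by (intros; unfold Rdiv; ring).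
  rewrite rsum_scal. field. lra.
Qed.

Lemma lse_shift k z dl : (0 < k)%nat ->
  lse k (fun a => z a + dl a) = lse k z + ln (rsum k (fun a => softmax k z a * exp (dl a))).
Proof.
  intros Hk. pose proof (partition_pos k z Hk).
  set (Z := rsum k (fun b => exp (z b))) in *.
  assert (Hmoment : rsum k (fun a => softmax k z a * exp (dl a))
                    = / Z * rsum k (fun a => exp (z a + dl a))).
  { rewrite <- rsum_scal. apply rsum_ext. intros a _.
    unfold softmax. fold Z. rewrite exp_plus. unfold Rdiv. ring. }
  assert (0 < rsum k (fun a => exp (z a + dl a))) by apply (partition_pos k _ Hk).
  rewrite Hmoment, ln_mult, ln_Rinv by (try apply Rinv_0_lt_compat; lra).
  unfold lse. fold Z. ring.
Qed.

Lemma lse_convex k z dl : (0 < k)%nat ->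
  lse k z + rsum k (fun a => softmax k z a * dl a) <= lse k (fun a => z a + dl a).
Proof.
  intros Hk. rewrite lse_shift by exact Hk. apply Rplus_le_compat_l.
  rewrite <- (ln_exp (rsum k _)). apply ln_monotone; [apply exp_pos|].
  apply exp_jensen; [intros; now apply softmax_nonneg|now apply softmax_sum].
Qed.

Lemma lse_smooth k z dl c0 y t : (0 < k)%nat -> 0 <= t <= 1 ->
  (forall a, (a < k)%nat -> dl a = c0 + y a /\ Rabs (y a) <= t) ->
  lse k (fun a => z a + dl a) <= lse k z + rsum k (fun a => softmax k z a * dl a) + t ^ 2.
Proof.
  intros Hk Ht Hdl. rewrite lse_shift, Rplus_assoc by exact Hk. apply Rplus_le_compat_l.
  assert (0 < rsum k (fun a => softmax k z a * exp (dl a))).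
  { apply rsum_pos; [exact Hk|]. intros a _.
    pose proof (exp_pos (dl a)). unfold softmax. pose proof (partition_pos k z Hk).
    pose proof (exp_pos (z a)). apply Rmult_lt_0_compat; [|lra].
    apply Rdiv_lt_0_compat; lra. }
  rewrite <- (ln_exp (_ + t ^ 2)). apply ln_monotone; [assumption|].
  apply exp_moment_bound with (c0 := c0) (y := y);
    [intros; now apply softmax_nonneg|now apply softmax_sum|exact Ht|exact Hdl].
Qed.

Lemma lse_deriv k z c : (0 < k)%nat ->
  derivable_pt_lim (fun t => lse k (fun a => z a + t * c a)) 0
    (rsum k (fun a => softmax k z a * c a)).
Proof.
  intros Hk. pose proof (partition_pos k z Hk).
  set (Z := rsum k (fun b => exp (z b))) in *.
  assert (Hsum : derivable_pt_lim (fun t => rsum k (fun a => exp (z a + t * c a))) 0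
                   (rsum k (fun a => exp (z a) * c a))).
  { clear. induction k as [|k IH]; simpl.
    - apply derivable_pt_lim_const.
    - apply (derivable_pt_lim_plus (fun t => rsum k (fun a => exp (z a + t * c a)))
                                   (fun t => exp (z k + t * c k))); [exact IH|].
      apply is_derive_Reals. auto_derive; [exact I|].
      rewrite Rmult_0_l, Rplus_0_r. ring. }
  assert (HZ0 : rsum k (fun a => exp (z a + 0 * c a)) = Z).
  { apply rsum_ext. intros a _. now rewrite Rmult_0_l, Rplus_0_r. }
  replace (rsum k (fun a => softmax k z a * c a))
    with (/ Z * rsum k (fun a => exp (z a) * c a)).
  2:{ rewrite <- rsum_scal. apply rsum_ext. intros a _.
      unfold softmax. fold Z. unfold Rdiv. ring. }
  apply (derivable_pt_lim_comp (fun t => rsum k (fun a => exp (z a + t * c a))) ln 0);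
    [exact Hsum|]. rewrite HZ0. now apply derivable_pt_lim_ln.
Qed.

(** * The multiclass loss as log-sum-exp of affine logits *)

Definition logit (d : nat) (V : nat -> nat -> R) (e : example) (a : nat) : R :=
  (if Nat.eqb a (snd e) then 0 else 1) - mxv d V (fst e) (snd e) + mxv d V (fst e) a.

Lemma loss_lse k d V e : loss k d V e = lse k (logit d V e).
Proof. destruct e; reflexivity. Qed.

(* Partial derivative of [logit d V e a] with respect to the entry V_{r i}. *)
Definition dlogit (e : example) (r i a : nat) : R :=
  fst e i * ((if Nat.eqb r a then 1 else 0) - (if Nat.eqb r (snd e) then 1 else 0)).

Lemma dlogit_row_sum k e i u a : (a < k)%nat -> (snd e < k)%nat ->
  rsum k (fun r => u r * dlogit e r i a) = (u a - u (snd e)) * fst e i.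
Proof.
  intros Ha Hy. unfold dlogit.
  rewrite (rsum_ext k _ (fun r => (if Nat.eqb r a then u r * fst e i else 0)
                                  + - (if Nat.eqb r (snd e) then u r * fst e i else 0)))
    by (intros r _; destruct (Nat.eqb r a), (Nat.eqb r (snd e)); ring).
  rewrite rsum_plus, rsum_opp, (rsum_delta k a (fun r => u r * fst e i) Ha),
    (rsum_delta k (snd e) (fun r => u r * fst e i) Hy). ring.
Qed.

Lemma mxv_sub d V W x a :
  mxv d V x a = mxv d W x a + rsum d (fun i => (V a i - W a i) * x i).
Proof. unfold mxv. rewrite <- rsum_plus. apply rsum_ext. intros; ring. Qed.

Lemma logit_affine k d V W e a : (a < k)%nat -> (snd e < k)%nat ->
  logit d V e a = logit d W e a
                  + rsum d (fun i => rsum k (fun r => (V r i - W r i) * dlogit e r i a)).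
Proof.
  intros Ha Hy.
  rewrite (rsum_ext d _ (fun i => (V a i - W a i) * fst e i
                                  + - ((V (snd e) i - W (snd e) i) * fst e i)))
    by (intros i _; rewrite (dlogit_row_sum k e i (fun r => V r i - W r i) a Ha Hy); ring).
  rewrite rsum_plus, rsum_opp. unfold logit.
  rewrite (mxv_sub d V W _ a), (mxv_sub d V W _ (snd e)). ring.
Qed.

Lemma logit_add_col k d W u j e a : (a < k)%nat -> (snd e < k)%nat -> (j < d)%nat ->
  logit d (add_col W u j) e a = logit d W e a + rsum k (fun r => u r * dlogit e r j a).
Proof.
  intros Ha Hy Hj. rewrite (logit_affine k d (add_col W u j) W e a Ha Hy). f_equal.
  rewrite (rsum_ext d _ (fun i => if Nat.eqb i j then rsum k (fun r => u r * dlogit e r i a) else 0)).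
  - apply (rsum_delta d j (fun i => rsum k (fun r => u r * dlogit e r i a)) Hj).
  - intros i _. unfold add_col. destruct (Nat.eqb i j).
    + apply rsum_ext. intros r _. ring.
    + transitivity (rsum k (fun _ => 0)); [apply rsum_ext; intros; ring|apply rsum_zero].
Qed.

Lemma bump_add_col W r i t :
  bump W r i t = add_col W (fun r' => if Nat.eqb r' r then t else 0) i.
Proof.
  apply functional_extensionality. intros r'. apply functional_extensionality. intros i'.
  unfold bump, add_col. destruct (Nat.eqb r' r), (Nat.eqb i' i); simpl; ring.
Qed.

Definition ex_grad (k d : nat) (W : nat -> nat -> R) (e : example) (r i : nat) : R :=
  rsum k (fun a => softmax k (logit d W e) a * dlogit e r i a).

Lemma ex_grad_deriv k d W e r i : (snd e < k)%nat -> (r < k)%nat -> (i < d)%nat ->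
  derivable_pt_lim (fun t => loss k d (bump W r i t) e) 0 (ex_grad k d W e r i).
Proof.
  intros Hy Hr Hi.
  assert (Hline : (fun t => loss k d (bump W r i t) e)
                  = (fun t => lse k (fun a => logit d W e a + t * dlogit e r i a))).
  { apply functional_extensionality. intros t.
    rewrite loss_lse, bump_add_col. apply lse_ext. intros a Ha.
    rewrite (logit_add_col k d W _ i e a Ha Hy Hi). f_equal.
    rewrite (rsum_ext k _ (fun r' => if Nat.eqb r' r then t * dlogit e r' i a else 0))
      by (intros r' _; destruct (Nat.eqb r' r); ring).
    apply (rsum_delta k r (fun r' => t * dlogit e r' i a) Hr). }
  rewrite Hline. apply lse_deriv. lia.
Qed.

Lemma ex_convex k d V W e : (snd e < k)%nat ->
  loss k d W e + rsum d (fun i => rsum k (fun r => (V r i - W r i) * ex_grad k d W e r i))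
  <= loss k d V e.
Proof.
  intros Hy. rewrite !loss_lse.
  rewrite (lse_ext k (logit d V e) (fun a => logit d W e a
             + rsum d (fun i => rsum k (fun r => (V r i - W r i) * dlogit e r i a))))
    by (intros a Ha; now apply logit_affine).
  eapply Rle_trans; [|apply lse_convex; lia]. right. f_equal.
  unfold ex_grad. rewrite rsum_weighted_swap. apply rsum_ext. intros i _.
  rewrite rsum_weighted_swap. apply rsum_ext. intros r _.
  rewrite <- rsum_scal. apply rsum_ext. intros; ring.
Qed.

Lemma ex_smooth k d W u j t e : (snd e < k)%nat -> (j < d)%nat -> Rabs (fst e j) <= 1 ->
  0 <= t <= 1 -> (forall a, (a < k)%nat -> Rabs (u a) <= t) ->
  loss k d (add_col W u j) e
  <= loss k d W e + rsum k (fun r => u r * ex_grad k d W e r j) + t ^ 2.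
Proof.
  intros Hy Hj Hx Ht Hu.
  set (dl := fun a => rsum k (fun r => u r * dlogit e r j a)).
  rewrite !loss_lse, (lse_ext k _ (fun a => logit d W e a + dl a))
    by (intros a Ha; now apply logit_add_col).
  replace (rsum k (fun r => u r * ex_grad k d W e r j))
    with (rsum k (fun a => softmax k (logit d W e) a * dl a)).
  - apply lse_smooth with (c0 := - (u (snd e) * fst e j)) (y := fun a => u a * fst e j);
      [lia|exact Ht|].
    intros a Ha. unfold dl. rewrite dlogit_row_sum by assumption. split; [ring|].
    rewrite Rabs_mult. pose proof (Hu a Ha). pose proof (Rabs_pos (u a)).
    pose proof (Rabs_pos (fst e j)). nra.
  - unfold dl, ex_grad. rewrite rsum_weighted_swap. apply rsum_ext. intros r _.
    rewrite <- rsum_scal. apply rsum_ext. intros; ring.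
Qed.

(* Each column of the per-example gradient has l1-norm at most 2 when |x_j| <= 1:
   it is x_j (p - 1_y) for a probability vector p. *)
Lemma ex_grad_col_bound k d W e j : (snd e < k)%nat -> Rabs (fst e j) <= 1 ->
  rsum k (fun r => Rabs (ex_grad k d W e r j)) <= 2.
Proof.
  intros Hy Hx. assert (Hk : (0 < k)%nat) by lia.
  set (p := softmax k (logit d W e)).
  assert (Hp : forall a, 0 <= p a) by (intros; now apply softmax_nonneg).
  apply Rle_trans with (rsum k (fun r => rsum k (fun a =>
    p a * ((if Nat.eqb r a then 1 else 0) + (if Nat.eqb r (snd e) then 1 else 0))))).
  - apply rsum_le. intros r _. unfold ex_grad. fold p.
    eapply Rle_trans; [apply rsum_abs|]. apply rsum_le. intros a _.
    rewrite Rabs_mult, (Rabs_pos_eq (p a) (Hp a)). apply Rmult_le_compat_l; [apply Hp|].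
    unfold dlogit. rewrite Rabs_mult.
    apply Rle_trans with (1 * Rabs ((if Nat.eqb r a then 1 else 0) - (if Nat.eqb r (snd e) then 1 else 0))).
    + apply Rmult_le_compat_r; [apply Rabs_pos|exact Hx].
    + rewrite Rmult_1_l. destruct (Nat.eqb r a), (Nat.eqb r (snd e));
        unfold Rabs; destruct Rcase_abs; lra.
  - right. rewrite rsum_swap, (rsum_ext k _ (fun a => 2 * p a)), rsum_scal.
    + unfold p. rewrite softmax_sum by exact Hk. ring.
    + intros a Ha. rewrite rsum_scal, rsum_plus.
      rewrite (rsum_delta k a (fun _ => 1) Ha), (rsum_delta k (snd e) (fun _ => 1) Hy). ring.
Qed.

(** * Gradient, convexity and smoothness of the empirical risk *)

Section Risk.

Variables (k d : nat) (S : list example).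

Hypothesis labels_valid : forall e, In e S -> (snd e < k)%nat.

Lemma risk_grad_eq W G r i : is_gradient k d S W G -> (r < k)%nat -> (i < d)%nat ->
  G r i = avg S (fun e => ex_grad k d W e r i).
Proof.
  intros HG Hr Hi.
  apply (uniqueness_limite (fun t => Lrisk k d S (bump W r i t)) 0); [now apply HG|].
  apply (avg_deriv S (fun t => loss k d (bump W r i t))).
  intros e He. apply ex_grad_deriv; auto.
Qed.

Lemma risk_grad_pairing W G c i : is_gradient k d S W G -> (i < d)%nat ->
  rsum k (fun r => c r * G r i) = avg S (fun e => rsum k (fun r => c r * ex_grad k d W e r i)).
Proof.
  intros HG Hi. rewrite (avg_rsum S k (fun r e => c r * ex_grad k d W e r i)).
  apply rsum_ext. intros r Hr.
  rewrite (risk_grad_eq W G r i HG Hr Hi). symmetry. apply avg_scal.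
Qed.

Lemma risk_convex W G V : is_gradient k d S W G ->
  Lrisk k d S W + rsum d (fun i => rsum k (fun r => (V r i - W r i) * G r i)) <= Lrisk k d S V.
Proof.
  intros HG.
  rewrite (rsum_ext d _ (fun i => avg S (fun e =>
             rsum k (fun r => (V r i - W r i) * ex_grad k d W e r i))))
    by (intros i Hi; now apply (risk_grad_pairing W G (fun r => V r i - W r i))).
  rewrite <- (avg_rsum S d (fun i e => rsum k (fun r => (V r i - W r i) * ex_grad k d W e r i))).
  rewrite !Lrisk_avg, <- avg_plus. apply avg_le. intros e He.
  apply ex_convex. auto.
Qed.

Lemma risk_smooth_col W G u j t : is_gradient k d S W G -> (j < d)%nat ->
  (forall e, In e S -> Rabs (fst e j) <= 1) ->
  0 <= t <= 1 -> (forall a, (a < k)%nat -> Rabs (u a) <= t) ->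
  Lrisk k d S (add_col W u j) <= Lrisk k d S W + rsum k (fun r => u r * G r j) + t ^ 2.
Proof.
  intros HG Hj Hx Ht Hu. rewrite (risk_grad_pairing W G u j HG Hj), !Lrisk_avg.
  eapply Rle_trans; [apply avg_le; intros e He; apply ex_smooth; auto; exact Ht|].
  rewrite !avg_plus. apply Rplus_le_compat_l. apply avg_const_le. nra.
Qed.

Lemma risk_grad_col_bound W G j : is_gradient k d S W G -> (j < d)%nat ->
  (forall e, In e S -> Rabs (fst e j) <= 1) ->
  rsum k (fun r => Rabs (G r j)) <= 2.
Proof.
  intros HG Hj Hx.
  apply Rle_trans with (rsum k (fun r => avg S (fun e => Rabs (ex_grad k d W e r j)))).
  - apply rsum_le. intros r Hr. rewrite (risk_grad_eq W G r j HG Hr Hj). apply avg_abs.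
  - rewrite <- (avg_rsum S k (fun r e => Rabs (ex_grad k d W e r j))).
    eapply Rle_trans; [apply avg_le; intros e He; apply ex_grad_col_bound; auto|].
    apply avg_const_le. lra.
Qed.

End Risk.

(** * Optimality conditions for support-restricted minimizers *)

Lemma supp_zero k d V F i r :
  supp_sub k d V F -> (i < d)%nat -> F i = false -> (r < k)%nat -> V r i = 0.
Proof.
  intros HV Hi HF Hr. destruct (Req_dec (V r i) 0) as [H|H]; [exact H|].
  assert (F i = true) by (apply HV; [exact Hi|now exists r]). congruence.
Qed.

Lemma bump_zero W r i : bump W r i 0 = W.
Proof.
  apply functional_extensionality. intros r'. apply functional_extensionality. intros i'.
  unfold bump. destruct (andb _ _); ring.
Qed.

Lemma supp_sub_bump k d W F r i t :
  supp_sub k d W F -> F i = true -> supp_sub k d (bump W r i t) F.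
Proof.
  intros HW HF i' Hi' [r' [Hr' Hne]]. destruct (Nat.eqb_spec i' i) as [->|Hneq]; [exact HF|].
  apply HW; [exact Hi'|]. exists r'. split; [exact Hr'|].
  unfold bump in Hne. apply Nat.eqb_neq in Hneq.
  rewrite Hneq, Bool.andb_false_r, Rplus_0_r in Hne. exact Hne.
Qed.

Lemma grad_zero_on_support k d S F W G r i :
  is_argmin_supp k d S F W -> is_gradient k d S W G ->
  (r < k)%nat -> (i < d)%nat -> F i = true -> G r i = 0.
Proof.
  intros [HW Hmin] HG Hr Hi HF.
  pose (pr := exist (fun l => derivable_pt_lim (fun t => Lrisk k d S (bump W r i t)) 0 l)
                    (G r i) (HG r i Hr Hi)).
  apply (deriv_minimum (fun t => Lrisk k d S (bump W r i t)) (-1) 1 0 pr); [lra|lra|].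
  intros t _ _. rewrite bump_zero. apply Hmin. now apply supp_sub_bump.
Qed.

(** * The gap bound and the descent step *)

Definition new_weight (k : nat) (F Fbar : nat -> bool) (Wstar : nat -> nat -> R) (i : nat) : R :=
  if andb (Fbar i) (negb (F i)) then rmax_abs k (fun r => Wstar r i) else 0.

Lemma new_weight_nonneg k F Fbar Wstar i : 0 <= new_weight k F Fbar Wstar i.
Proof. unfold new_weight. destruct (andb _ _); [apply rmax_abs_nonneg|lra]. Qed.

(* Column i of the first-order term <Wstar - W, G>: it vanishes for i in F (optimality)
   and outside Fbar (both supports), and is bounded by Hölder on Fbar \ F. *)
Lemma gap_column_bound k d S F Fbar W Wstar G i :
  is_argmin_supp k d S F W -> supp_sub k d Wstar Fbar -> is_gradient k d S W G -> (i < d)%nat ->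
  - (new_weight k F Fbar Wstar i * rsum k (fun r => Rabs (G r i)))
  <= rsum k (fun r => (Wstar r i - W r i) * G r i).
Proof.
  intros HW HWs HG Hi. unfold new_weight. destruct (F i) eqn:HF.
  - rewrite Bool.andb_false_r,
      (rsum_ext k (fun r => (Wstar r i - W r i) * G r i) (fun _ => 0)), rsum_zero; [lra|].
    intros r Hr. rewrite (grad_zero_on_support k d S F W G r i HW HG Hr Hi HF). ring.
  - rewrite (rsum_ext k (fun r => (Wstar r i - W r i) * G r i) (fun r => Wstar r i * G r i))
      by (intros r Hr; rewrite (supp_zero k d W F i r (proj1 HW) Hi HF Hr); ring).
    destruct (Fbar i) eqn:HFb; simpl; [apply rsum_holder|].
    rewrite (rsum_ext k (fun r => Wstar r i * G r i) (fun _ => 0)), rsum_zero; [lra|].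
    intros r Hr. rewrite (supp_zero k d Wstar Fbar i r HWs Hi HFb Hr). ring.
Qed.

Lemma optimality_gap_bound k d S F Fbar W Wstar G j :
  (forall e, In e S -> (snd e < k)%nat) ->
  is_argmin_supp k d S F W -> supp_sub k d Wstar Fbar -> is_gradient k d S W G ->
  (forall i, (i < d)%nat -> rsum k (fun r => Rabs (G r i)) <= rsum k (fun r => Rabs (G r j))) ->
  Lrisk k d S W - Lrisk k d S Wstar
  <= rsum k (fun r => Rabs (G r j)) * rsum d (new_weight k F Fbar Wstar).
Proof.
  intros Hlab HW HWs HG Hmax.
  pose proof (risk_convex k d S Hlab W G Wstar HG) as Hconv.
  assert (Hcols : - (rsum k (fun r => Rabs (G r j)) * rsum d (new_weight k F Fbar Wstar))
                  <= rsum d (fun i => rsum k (fun r => (Wstar r i - W r i) * G r i))).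
  { rewrite <- rsum_scal, <- rsum_opp. apply rsum_le. intros i Hi.
    eapply Rle_trans; [|apply (gap_column_bound k d S F Fbar W Wstar G i HW HWs HG Hi)].
    pose proof (Hmax i Hi). pose proof (new_weight_nonneg k F Fbar Wstar i). nra. }
  lra.
Qed.

Lemma sign_mul_self x : sign x * x = Rabs x.
Proof.
  unfold sign. destruct (total_order_T 0 x) as [[H|H]|H].
  - rewrite Rabs_pos_eq; lra.
  - subst. rewrite Rabs_R0. ring.
  - rewrite Rabs_left; lra.
Qed.

Lemma Rabs_sign_le x : Rabs (sign x) <= 1.
Proof.
  unfold sign. destruct (total_order_T 0 x) as [[H|H]|H];
    unfold Rabs; destruct Rcase_abs; lra.
Qed.

Lemma descent_along_column k d S W G j :
  (forall e, In e S -> (snd e < k)%nat) -> is_gradient k d S W G -> (j < d)%nat ->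
  (forall e, In e S -> Rabs (fst e j) <= 1) ->
  exists u, Lrisk k d S (add_col W u j)
            <= Lrisk k d S W - (rsum k (fun r => Rabs (G r j))) ^ 2 / 4.
Proof.
  intros Hlab HG Hj Hx. set (G1 := rsum k (fun r => Rabs (G r j))).
  assert (HG1 : 0 <= G1 <= 2).
  { split; [apply rsum_nonneg; intros; apply Rabs_pos|].
    exact (risk_grad_col_bound k d S Hlab W G j HG Hj Hx). }
  exists (fun r => - (G1 / 2 * sign (G r j))).
  eapply Rle_trans; [apply (risk_smooth_col k d S Hlab W G _ j (G1 / 2) HG Hj Hx)|].
  - lra.
  - intros a _. rewrite Rabs_Ropp, Rabs_mult, (Rabs_pos_eq (G1 / 2)) by lra.
    pose proof (Rabs_sign_le (G a j)). nra.
  - rewrite (rsum_ext k _ (fun r => - (G1 / 2) * Rabs (G r j)))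
      by (intros r _; rewrite <- sign_mul_self; ring).
    rewrite rsum_scal. fold G1. right. field.
Qed.

Lemma gap_squared_bound eps B G1 D :
  0 < eps -> 0 <= G1 -> 0 <= B -> eps <= G1 * B -> G1 ^ 2 / 4 <= D ->
  D >= eps ^ 2 / (4 * B ^ 2).
Proof.
  intros Heps HG1 HB Hgap HD.
  assert (HBpos : 0 < B) by (destruct HB as [HB|HB]; [exact HB|subst; nra]).
  assert (Hratio : eps / B <= G1).
  { apply (Rmult_le_reg_r B); [exact HBpos|]. unfold Rdiv.
    rewrite Rmult_assoc, Rinv_l, Rmult_1_r by lra. lra. }
  assert (0 <= eps / B) by (apply Rlt_le, Rdiv_lt_0_compat; lra).
  replace (eps ^ 2 / (4 * B ^ 2)) with ((eps / B) ^ 2 / 4) by (field; lra).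
  nra.
Qed.

Theorem lemmaA3 (k d : nat) (S : list example) (F Fbar : nat -> bool)
  (W Wstar G : nat -> nat -> R) (j : nat) (m : R) :
  (forall e, In e S ->
     (forall i, (i < d)%nat -> -1 <= fst e i <= 1) /\ (snd e < k)%nat) ->
  (exists i, (i < d)%nat /\ Fbar i = true /\ F i = false) ->
  is_argmin_supp k d S F W ->
  is_argmin_supp k d S Fbar Wstar ->
  is_gradient k d S W G ->
  (j < d)%nat ->
  (forall i, (i < d)%nat ->
     rsum k (fun r => Rabs (G r i)) <= rsum k (fun r => Rabs (G r j))) ->
  is_glb (fun z => exists u : nat -> R, z = Lrisk k d S (add_col W u j)) m ->
  Lrisk k d S W > Lrisk k d S Wstar ->
  Lrisk k d S W - m >=
    (Lrisk k d S W - Lrisk k d S Wstar) ^ 2 /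
    (4 * (rsum d (fun i => if andb (Fbar i) (negb (F i))
                           then rmax_abs k (fun r => Wstar r i) else 0)) ^ 2).
Proof.
  intros Hdata _ HW [HWs _] HG Hj Hmax [Hm _] Hgt.
  change (rsum d _) with (rsum d (new_weight k F Fbar Wstar)).
  assert (Hlab : forall e, In e S -> (snd e < k)%nat) by (intros e He; apply Hdata, He).
  assert (Hxj : forall e, In e S -> Rabs (fst e j) <= 1)
    by (intros e He; apply Rabs_le, (proj1 (Hdata e He)), Hj).
  destruct (descent_along_column k d S W G j Hlab HG Hj Hxj) as [u Hdescent].
  assert (m <= Lrisk k d S (add_col W u j)) by (apply Hm; now exists u).
  apply gap_squared_bound with (G1 := rsum k (fun r => Rabs (G r j))).
  - lra.
  - apply rsum_nonneg. intros; apply Rabs_pos.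
  - apply rsum_nonneg. intros; apply new_weight_nonneg.
  - exact (optimality_gap_bound k d S F Fbar W Wstar G j Hlab HW HWs HG Hmax).
  - lra.
Qed.
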